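(* Let $F,G$ be Fourier matrices of the same size $N$ with indexing groups $I_F,I_G$. Then (a) $\mathrm{Stab}(F)=\{(P_\rho,P_{(h^{FF}_\rho)^{-1}}):\ \rho\in\mathrm{Aut}(I_F)\}=\{(P_{(h^{FF}_\rho)^{-1}},P_\rho):\ \rho\in\mathrm{Aut}(I_F)\}$; (b) $\mathrm{Map}(F,G)=\{(P_\chi,P_{(h^{FG}_\chi)^{-1}}):\ \chi\in\mathrm{Iso}(I_G,I_F)\}=\{(P_{(h^{FG}_\chi)^{-1}},P_\chi):\ \chi\in\mathrm{Iso}(I_G,I_F)\}$, where $\mathrm{Stab}(F)$ is the set of pairs $(P,R)$ of $N\times N$ permutation matrices with $PFR^{-1}=F$ and $\mathrm{Map}(F,G)$ is the set of such pairs with $PFR^{-1}=G$.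
   Context: For $n\ge1$, $F_n$ is the $n\times n$ matrix with rows and columns indexed by $\mathbb Z_n$ and entries $e^{2\pi i\,\tilde i\tilde j/n}$. A Fourier matrix is $F=F_{N_1}\otimes\cdots\otimes F_{N_r}$ of size $N=N_1\cdots N_r$, indexed by $I_F=\mathbb Z_{N_1}\times\cdots\times\mathbb Z_{N_r}$ with $F_{i,j}=\prod_x(F_{N_x})_{i_x,j_x}$; group indices correspond to ordinary indices via lexicographic order. For a bijection $\varphi:I_G\to I_F$, $P_\varphi$ is the permutation matrix (rows indexed by $I_G$, columns by $I_F$) with $(P_\varphi)_{i,\varphi(i)}=1$. $\mathrm{Iso}(I_G,I_F)$ is the set of group isomorphisms $I_G\to I_F$ and $\mathrm{Aut}(I_F)=\mathrm{Iso}(I_F,I_F)$. For an isomorphism $\chi:I_G\to I_F$, $h^{FG}_\chi:I_F\to I_G$ is the unique bijection with $F_{\chi(i),j}=G_{i,h^{FG}_\chi(j)}$ for all $i\in I_G$, $j\in I_F$ (it is an isomorphism). *)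

From HB Require Import structures.
From mathcomp Require Import all_boot all_order all_algebra.
From mathcomp Require Import complex.
From mathcomp Require Import reals trigo.

Set Implicit Arguments.
Unset Strict Implicit.
Unset Printing Implicit Defensive.

Import Order.TTheory GRing.Theory Num.Theory.
Local Open Scope ring_scope.

Definition expi {R : realType} (t : R) : R[i] := Complex (cos t) (sin t).

(* The indexing group I_F = Z_{N_1} x ... x Z_{N_r}, where N_x = (ns x).+1
   (so N_x >= 1 is built in).  Z_{N_x} is represented by 'I_(N_x). *)
Definition grp (r : nat) (ns : 'I_r -> nat) : finType :=
  {dffun forall x : 'I_r, 'I_(ns x).+1}.

Definition gadd (r : nat) (ns : 'I_r -> nat) (a b : grp ns) : grp ns :=
  @finfun 'I_r (fun x => 'I_(ns x).+1) (fun x => (a x + b x)%R).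

Definition gzero (r : nat) (ns : 'I_r -> nat) : grp ns :=
  @finfun 'I_r (fun x => 'I_(ns x).+1) (fun x => ord0).

Definition is_grp_iso (r s : nat) (ns : 'I_r -> nat) (ms : 'I_s -> nat)
    (chi : grp ns -> grp ms) : Prop :=
  bijective chi /\ forall a b, chi (gadd a b) = gadd (chi a) (chi b).

(* Group-indexed entries of F = F_{N_1} (x) ... (x) F_{N_r}:
   F_{i,j} = prod_x exp(2 pi i * i_x j_x / N_x). *)
Definition fentry {R : realType} (r : nat) (ns : 'I_r -> nat) (i j : grp ns) : R[i] :=
  \prod_(x < r) expi (2 * pi * ((i x : nat) * (j x : nat))%:R / ((ns x).+1)%:R).

(* Lexicographic correspondence: the ordinary index k corresponds to the
   group index whose x-th coordinate is (k / prod_{y > x} N_y) mod N_x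
   (first coordinate most significant, as in the Kronecker product). *)
Definition lexw (r : nat) (ns : 'I_r -> nat) (x : 'I_r) : nat :=
  (\prod_(y < r | (x < y)%N) (ns y).+1)%N.

Definition lexdec (r : nat) (ns : 'I_r -> nat) (k : nat) : grp ns :=
  @finfun 'I_r (fun x => 'I_(ns x).+1)
    (fun x => inord ((k %/ lexw ns x) %% (ns x).+1)%N).

Definition fourier_mx {R : realType} (N r : nat) (ns : 'I_r -> nat) : 'M[R[i]]_N :=
  \matrix_(k < N, l < N) fentry (lexdec ns k) (lexdec ns l).

(* P_phi for phi : I_G -> I_F (rows indexed by I_G, columns by I_F):
   (P_phi)_{i, phi(i)} = 1, other entries 0. *)
Definition Pmx {R : realType} (N r s : nat) (ns : 'I_r -> nat) (ms : 'I_s -> nat)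
    (phi : grp ms -> grp ns) : 'M[R[i]]_N :=
  \matrix_(k < N, l < N) (phi (lexdec ms k) == lexdec ns l)%:R.

(* P_{h^{-1}} for a bijection h : I_F -> I_G (so h^{-1} : I_G -> I_F; rows
   indexed by I_G, columns by I_F): entry (a, b) is 1 iff h^{-1}(a) = b,
   i.e. iff h(b) = a. *)
Definition Pinvmx {R : realType} (N r s : nat) (ns : 'I_r -> nat) (ms : 'I_s -> nat)
    (h : grp ns -> grp ms) : 'M[R[i]]_N :=
  \matrix_(k < N, l < N) (h (lexdec ns l) == lexdec ms k)%:R.

(* h^{FG}_chi : I_F -> I_G, the unique bijection with
   F_{chi(i), j} = G_{i, h(j)} for all i in I_G, j in I_F
   (chosen by [pick]; a default is returned if no such bijection exists). *)
Definition hFG {R : realType} (r s : nat) (ns : 'I_r -> nat) (ms : 'I_s -> nat)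
    (chi : grp ms -> grp ns) : grp ns -> grp ms :=
  match [pick h : {ffun grp ns -> grp ms} |
           injectiveb h && [forall y : grp ms, y \in codom h] &&
           [forall i : grp ms, forall j : grp ns,
              @fentry R r ns (chi i) j == @fentry R s ms i (h j)]] with
  | Some h => fun j => h j
  | None => fun _ => gzero ms
  end.

Definition in_Map {R : realType} (N : nat) (F G : 'M[R[i]]_N) (P Q : 'M[R[i]]_N) : Prop :=
  is_perm_mx P /\ is_perm_mx Q /\ P *m F *m invmx Q = G.

Definition in_Stab {R : realType} (N : nat) (F : 'M[R[i]]_N) (P Q : 'M[R[i]]_N) : Prop :=
  is_perm_mx P /\ is_perm_mx Q /\ P *m F *m invmx Q = F.

From HB Require Import structures.
From mathcomp Require Import all_boot all_order all_algebra.
From mathcomp Require Import complex.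
From mathcomp Require Import reals trigo.
From mathcomp Require Import fingroup perm ring lra zify.
Import Order.TTheory GRing.Theory Num.Theory.
Local Open Scope ring_scope.

(* A pair (perm_mx sg, perm_mx tg) maps F to G iff F_{sg k, tg l} = G_{k, l};
   through the lexicographic bijections between 'I_N and the index groups this
   reads F_{chi i, j} = G_{i, h j} for bijections chi : I_G -> I_F and
   h : I_F -> I_G.  The characters j |-> F_{a, j} separate points and are
   multiplicative in a, so such a chi is an isomorphism and h is determined by
   chi, i.e. h = h^{FG}_chi.  Conversely an isomorphism chi has such a partner:
   since N_x divides M_y times the x-coordinate of chi(e_y), the character
   i |-> F_{chi i, j} is the G-character of an explicit "transposed" element.
   The second descriptions follow by transposing, F and G being symmetric. *)

Section Expi.
Variable R : realType.
Implicit Types t u : R.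

Lemma expi0 : expi (0 : R) = 1.
Proof. by rewrite /expi cos0 sin0. Qed.

Lemma expiD t u : expi (t + u) = expi t * expi u.
Proof. by rewrite /expi /= cosD sinD; congr Complex; ring. Qed.

Lemma expi_sum (I : finType) (F : I -> R) :
  expi (\sum_(i : I) F i) = \prod_(i : I) expi (F i).
Proof. exact: (big_morph _ expiD expi0). Qed.

Lemma expiD2pin t (n : nat) : expi (t + 2 * pi * n%:R) = expi t.
Proof.
have -> : 2 * pi * n%:R = (pi *+ 2) *+ n :> R.
  by rewrite -mulrnA -(mulr_natr pi (2 * n)) natrM mulrA [pi * _]mulrC.
by rewrite /expi (periodicn (@cosD2pi R)) (periodicn (@sinD2pi R)).
Qed.

Lemma cos_eq1 t : `|t| < pi *+ 2 -> cos t = 1 -> t = 0.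
Proof.
move=> t2pi; rewrite -cos_norm => ct; apply/normr0_eq0.
have cos0_in : (0 : R) \in `[0, pi] by rewrite in_itv /= lexx pi_ge0.
have t0 := normr_ge0 t.
have [tpi|pit] := lerP `|t| pi.
  by apply: (cos_inj _ cos0_in); rewrite ?cos0 // in_itv /= t0.
have u_in : pi *+ 2 - `|t| \in `[0, pi].
  by rewrite in_itv /= subr_ge0 (ltW t2pi) lerBlDr mulr2n lerD2l ltW.
suff /(cos_inj u_in cos0_in)/eqP : cos (pi *+ 2 - `|t|) = cos 0.
  by rewrite subr_eq0 gt_eqF.
by rewrite cosB cos2pi sin2pi ct mul0r addr0 mulr1 cos0.
Qed.

Lemma expi_modn (k n : nat) : (0 < n)%N ->
  expi (2 * pi * (k %% n)%:R / n%:R : R) = expi (2 * pi * k%:R / n%:R).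
Proof.
move=> n0; have nR0 : (n%:R : R) != 0 by rewrite pnatr_eq0 -lt0n.
rewrite [in RHS](divn_eq k n) -(expiD2pin _ (k %/ n)); congr expi.
by rewrite natrD natrM; field.
Qed.

Lemma expi_inj (a b n : nat) : (a < n)%N -> (b < n)%N ->
  expi (2 * pi * a%:R / n%:R : R) = expi (2 * pi * b%:R / n%:R) -> a = b.
Proof.
move=> an bn [ca sa].
have n0 : (0 : R) < n%:R by rewrite ltr0n (leq_ltn_trans _ an).
have pi2 : (0 : R) < pi *+ 2 by rewrite pmulrn_lgt0 // pi_gt0.
set x := 2 * pi * a%:R / n%:R in ca sa; set y := 2 * pi * b%:R / n%:R in ca sa.
have xy : x - y = pi *+ 2 * ((a%:R - b%:R) / n%:R).
  by rewrite /x /y -mulr_natr; field; rewrite gt_eqF.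
have q1 : `|(a%:R - b%:R) / n%:R| < 1 :> R.
  have an' : (a%:R : R) < n%:R by rewrite ltr_nat.
  have bn' : (b%:R : R) < n%:R by rewrite ltr_nat.
  have a0 := ler0n R a; have b0 := ler0n R b.
  rewrite normf_div normr_nat ltr_pdivrMr // mul1r ltr_norml.
  by apply/andP; split; lra.
have /cos_eq1 : `|x - y| < pi *+ 2.
  by rewrite xy normrM gtr0_norm // -[X in _ < X]mulr1 ltr_pM2l.
rewrite cosB ca sa -!expr2 cos2Dsin2 xy => /(_ erefl)/eqP.
rewrite mulf_eq0 (gt_eqF pi2) mulf_eq0 invr_eq0 (gt_eqF n0) orbF subr_eq0.
by rewrite eqr_nat => /eqP.
Qed.

End Expi.

Section Group.
Variables (r : nat) (ns : 'I_r -> nat).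
Implicit Types a b c : grp ns.

Lemma gaddE a b x : val (gadd a b x) = ((a x + b x) %% (ns x).+1)%N.
Proof. by rewrite ffunE. Qed.

Lemma gzeroE x : val (gzero ns x) = 0%N.
Proof. by rewrite ffunE. Qed.

Lemma gaddg0 a : gadd a (gzero ns) = a.
Proof. by apply/ffunP => x; rewrite !ffunE addr0. Qed.

Lemma gaddI a : injective (gadd a).
Proof.
move=> b c /ffunP eq_bc; apply/ffunP => x.
by have := eq_bc x; rewrite !ffunE => /addrI.
Qed.

Definition gunit (x : 'I_r) : grp ns :=
  @finfun 'I_r (fun y => 'I_(ns y).+1) (fun y => inord (y == x)).

Lemma gunitE x y : val (gunit x y) = ((y == x) && (0 < ns x))%N.
Proof.
rewrite ffunE /=; case: eqP => [->|_] /=; last by rewrite inordK.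
by case: (ns x) => [|n]; [rewrite /inord /insubd insubF | rewrite inordK].
Qed.

Definition gmul (k : nat) a : grp ns := iter k (gadd a) (gzero ns).

Lemma gmulE k a x : val (gmul k a x) = ((k * a x) %% (ns x).+1)%N.
Proof.
elim: k => [|k IH] /=; first by rewrite gzeroE.
by rewrite gaddE IH modnDmr mulSn.
Qed.

Lemma gmul_order_gunit x : gmul (ns x).+1 (gunit x) = gzero ns.
Proof.
apply/ffunP => y; apply/val_inj; rewrite gmulE gzeroE gunitE.
by case: eqP => [->|_]; case: (ns x) => [|n] //=; rewrite ?muln1 ?modnn ?muln0.
Qed.

Lemma grp_ind (P : grp ns -> Prop) :
  P (gzero ns) -> (forall a x, P a -> P (gadd a (gunit x))) -> forall a, P a.
Proof.
move=> P0 PS a; move: {2}(\sum_x a x)%N (erefl (\sum_x (a x : nat))%N) => n.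
elim: n a => [|n IH] a sum_a.
  suff -> : a = gzero ns by [].
  apply/ffunP => x; apply/val_inj; rewrite gzeroE.
  by move/eqP: sum_a; rewrite sum_nat_eq0 => /forallP /(_ x) /eqP.
have [x ax0 | a0] := pickP (fun x => 0 < a x)%N; last first.
  by move: sum_a; rewrite big1 // => x _; apply/eqP; rewrite -leqn0 leqNgt a0.
pose a' : grp ns := @finfun 'I_r (fun y => 'I_(ns y).+1)
                     (fun y => inord (a y - (y == x))).
have a'E y : (a' y : nat) = (a y - (y == x))%N.
  by rewrite ffunE /= inordK // (leq_ltn_trans (leq_subr _ _)).
have -> : a = gadd a' (gunit x).
  apply/ffunP => y; apply/val_inj; rewrite gaddE gunitE a'E.
  have [->|_] := eqVneq y x; last by rewrite subn0 addn0 modn_small.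
  have nx0 : (0 < ns x)%N by move: (ltn_ord (a x)) ax0; lia.
  by rewrite nx0 subnK // modn_small.
apply/PS/IH/succn_inj; rewrite -sum_a -addn1.
rewrite [RHS](eq_bigr (fun y => a' y + (y == x))%N) => [|y _]; last first.
  by rewrite a'E subnK //; case: eqP => [->|].
rewrite big_split /=; congr (_ + _)%N.
by rewrite (bigD1 x) //= eqxx big1 // => y /negPf->.
Qed.

Section Entries.
Variable R : realType.
Local Notation fentry := (@fentry R r ns).

Lemma fentryC a b : fentry a b = fentry b a.
Proof. by apply: eq_bigr => x _; rewrite mulnC. Qed.

Lemma fentry0l c : fentry (gzero ns) c = 1.
Proof.
by rewrite /fentry big1 // => x _; rewrite gzeroE mul0n mulr0 mul0r expi0.
Qed.

Lemma fentryDl a b c : fentry (gadd a b) c = fentry a c * fentry b c.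
Proof.
rewrite /fentry -big_split /=; apply: eq_bigr => x _.
rewrite gaddE -expi_modn // modnMml expi_modn //.
by rewrite -expiD -mulrDl -mulrDr -natrD mulnDl.
Qed.

Lemma fentry_gunit x c :
  fentry (gunit x) c = expi (2 * pi * ((0 < ns x) * c x)%N%:R / (ns x).+1%:R).
Proof.
rewrite /fentry (bigD1 x) //= big1 ?mulr1 ?gunitE ?eqxx // => y /negPf yx.
by rewrite gunitE yx mul0n mulr0 mul0r expi0.
Qed.

Lemma fentry_injr a b : (forall c, fentry c a = fentry c b) -> a = b.
Proof.
move=> eq_ab; apply/ffunP => x; apply/val_inj.
have := eq_ab (gunit x); rewrite !fentry_gunit.
case: (ns x) (a x) (b x) => [|n] u v; last by rewrite !mul1n; apply: expi_inj.
by move=> _; case: u v => [[]//] ? [[]//].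
Qed.

Lemma fentry_injl a b : (forall c, fentry a c = fentry b c) -> a = b.
Proof. by move=> eq_ab; apply: fentry_injr => c; rewrite !(fentryC c). Qed.

End Entries.
End Group.
Arguments gunit {r} ns x.
Arguments gmul {r ns}.

Section Homomorphism.
Variables (r s : nat) (ns : 'I_r -> nat) (ms : 'I_s -> nat).
Variable chi : grp ms -> grp ns.
Hypothesis chiD : forall a b, chi (gadd a b) = gadd (chi a) (chi b).

Lemma gmorph0 : chi (gzero ms) = gzero ns.
Proof. by apply: (@gaddI _ _ (chi (gzero ms))); rewrite -chiD !gaddg0. Qed.

Lemma gmorph_gmul k a : chi (gmul k a) = gmul k (chi a).
Proof. by elim: k => [|k IH] /=; rewrite ?gmorph0 // chiD IH. Qed.

Lemma dvdn_gmorph_gunit y x : ((ns x).+1 %| (ms y).+1 * chi (gunit ms y) x)%N.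
Proof.
have := congr1 (fun g : grp ns => val (g x)) (gmorph_gmul (ms y).+1 (gunit ms y)).
by rewrite gmul_order_gunit gmorph0 gmulE gzeroE /= => /esym/eqP.
Qed.

(* The x-coordinate of chi (gunit y) is hom_coef y x * N_x / M_y; hom_tr is the
   homomorphism given by the transposed integer matrix, taken modulo M_y. *)
Definition hom_coef (y : 'I_s) (x : 'I_r) : nat :=
  ((ms y).+1 * chi (gunit ms y) x %/ (ns x).+1)%N.

Definition hom_tr (j : grp ns) : grp ms :=
  @finfun 'I_s (fun y => 'I_(ms y).+1)
    (fun y => inord ((\sum_(x < r) hom_coef y x * j x) %% (ms y).+1)).

Variable R : realType.

Lemma fentry_hom_tr_gunit y j :
  @fentry R r ns (chi (gunit ms y)) j = fentry (gunit ms y) (hom_tr j).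
Proof.
set m := (ms y).+1; set S := (\sum_(x < r) hom_coef y x * j x)%N.
have mR0 : (m%:R : R) != 0 by rewrite pnatr_eq0.
have -> : @fentry R r ns (chi (gunit ms y)) j = expi (2 * pi * S%:R / m%:R).
  rewrite /fentry -expi_sum /S natr_sum mulr_sumr mulr_suml; congr expi.
  apply: eq_bigr => x _.
  have := divnK (dvdn_gmorph_gunit y x); rewrite -/(hom_coef y x) -/m => coefE.
  have chiE : (chi (gunit ms y) x)%:R
              = (hom_coef y x)%:R * (ns x).+1%:R / m%:R :> R.
    by rewrite -natrM coefE natrM mulrC mulKf.
  by rewrite !natrM chiE; field; rewrite mR0 nat1r pnatr_eq0.
rewrite fentry_gunit ffunE /= inordK ?ltn_pmod // -/m -/S -(expi_modn _ S) //.
by case: (ms y) @m mR0 => [|n] m _ /=; rewrite ?mul1n // modn1 mul0n.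
Qed.

Lemma fentry_hom_tr i j : @fentry R r ns (chi i) j = fentry i (hom_tr j).
Proof.
elim/grp_ind: i j => [|i y IH] j; first by rewrite gmorph0 !fentry0l.
by rewrite chiD !fentryDl IH fentry_hom_tr_gunit.
Qed.

End Homomorphism.
Arguments hom_tr {r s ns ms} chi j.
Arguments fentry_hom_tr {r s ns ms chi} chiD {R} i j.

Section Intertwining.
Variables (R : realType) (r s : nat) (ns : 'I_r -> nat) (ms : 'I_s -> nat).
Implicit Types (chi : grp ms -> grp ns) (h : grp ns -> grp ms).

Definition intertwines chi h :=
  forall i j, @fentry R r ns (chi i) j = @fentry R s ms i (h j).

Lemma intertwines_gadd chi h : intertwines chi h ->
  forall a b, chi (gadd a b) = gadd (chi a) (chi b).
Proof.
move=> chi_h a b; apply: (@fentry_injl _ _ R) => j.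
by rewrite chi_h !fentryDl !chi_h.
Qed.

Lemma intertwines_injr chi h h' :
  intertwines chi h -> intertwines chi h' -> h =1 h'.
Proof.
move=> chi_h chi_h' j; apply: (@fentry_injr _ _ R) => g.
by rewrite -chi_h chi_h'.
Qed.

Lemma intertwines_inj chi h : bijective chi -> intertwines chi h -> injective h.
Proof.
move=> [chiV _ chiVK] chi_h j j' eq_hj; apply: (@fentry_injr _ _ R) => c.
by rewrite -[c]chiVK chi_h eq_hj -chi_h.
Qed.

Hypothesis card_grp_eq : #|grp ns| = #|grp ms|.

Lemma hFG_spec chi : is_grp_iso chi ->
  bijective (@hFG R r s ns ms chi) /\ intertwines chi (@hFG R r s ns ms chi).
Proof.
move=> [chi_bij chiD]; rewrite /hFG; case: pickP => [h | none].
  case/andP=> /andP[/injectiveP h_inj _] /'forall_forallP chi_h.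
  split=> [|i j]; last exact/eqP/chi_h.
  by apply: inj_card_bij; rewrite ?card_grp_eq.
have tr_inj : injective [ffun j => hom_tr chi j].
  move=> j j'; rewrite !ffunE.
  exact: (intertwines_inj _ _ chi_bij (fentry_hom_tr chiD)).
case/negP: (negbT (none [ffun j => hom_tr chi j])).
rewrite (introT (injectiveP _) tr_inj) /=; apply/andP; split.
  by apply/forallP => y; apply: (inj_card_onto tr_inj); rewrite card_grp_eq.
by apply/'forall_forallP => i j; rewrite ffunE (fentry_hom_tr chiD).
Qed.

Lemma hFG_unique chi h : is_grp_iso chi -> intertwines chi h ->
  @hFG R r s ns ms chi =1 h.
Proof.
move=> chi_iso; have [_ chi_hFG] := hFG_spec _ chi_iso.
exact: intertwines_injr.
Qed.

End Intertwining.
Arguments intertwines R {r s ns ms}.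
Arguments intertwines_gadd {R r s ns ms chi h}.
Arguments hFG_spec R {r s ns ms} card_grp_eq {chi}.
Arguments hFG_unique {R r s ns ms} card_grp_eq {chi h}.

Lemma modn_mul_split k n d : (k %% (n * d) = (k %/ d %% n) * d + k %% d)%N.
Proof.
by rewrite modn_divl {1}(divn_eq (k %% (n * d)) d) modn_dvdm // dvdn_mull.
Qed.

Section Lexicographic.
Variables (r : nat) (ns : 'I_r -> nat).

Lemma card_grp : #|grp ns| = (\prod_(x < r) (ns x).+1)%N.
Proof.
rewrite card_dep_ffun foldrE big_map big_enum /=.
by apply: eq_bigr => x _; rewrite card_ord.
Qed.

Definition lexw_from (t : nat) := (\prod_(y < r | (t <= y)%N) (ns y).+1)%N.

Lemma lexw_from_S t (tr : (t < r)%N) :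
  lexw_from t = ((ns (Ordinal tr)).+1 * lexw_from t.+1)%N.
Proof.
rewrite /lexw_from (bigD1 (Ordinal tr)) //=; congr (_ * _)%N.
apply: eq_bigl => y /=; rewrite ltn_neqAle andbC; congr (_ && _).
by rewrite -(inj_eq val_inj) /= eq_sym.
Qed.

Lemma lexdec_eq_modn k k' t : (t <= r)%N -> lexdec ns k = lexdec ns k' ->
  (k %% lexw_from t = k' %% lexw_from t)%N.
Proof.
move=> tr eq_kk'; rewrite -(subKn tr).
elim: (r - t)%N (leq_subr t r) => [|d IH] dr.
  by rewrite subn0 /lexw_from big_pred0 ?modn1 // => y; rewrite leqNgt ltn_ord.
have dr' : (r - d.+1 < r)%N by lia.
have Sd : (r - d.+1).+1 = (r - d)%N by lia.
rewrite (lexw_from_S _ dr') !modn_mul_split Sd IH ?(ltnW dr) //.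
congr (_ * _ + _)%N.
have := congr1 (fun g : grp ns => val (g (Ordinal dr'))) eq_kk'.
by rewrite /lexdec !ffunE /= !inordK ?ltn_pmod // /lexw -/(lexw_from _) Sd.
Qed.

Variable N : nat.
Hypothesis card_N : (\prod_(x < r) (ns x).+1)%N = N.

Lemma lexdec_inj : injective (fun k : 'I_N => lexdec ns k).
Proof.
move=> k k' /(lexdec_eq_modn _ _ _ (leq0n r)); rewrite [lexw_from 0]card_N.
by rewrite !modn_small // => /val_inj.
Qed.

Lemma lexdec_bij : bijective (fun k : 'I_N => lexdec ns k).
Proof. by apply: (inj_card_bij lexdec_inj); rewrite card_grp card_N card_ord. Qed.

End Lexicographic.
Arguments lexdec_inj {r ns N}.
Arguments lexdec_bij {r ns N}.

Lemma invmx_perm (F : fieldType) n (t : 'S_n) :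
  invmx (perm_mx t : 'M[F]_n) = perm_mx t^-1.
Proof.
have tV : (perm_mx t : 'M[F]_n) *m perm_mx t^-1 = 1%:M.
  by rewrite -perm_mxM mulgV perm_mx1.
by rewrite -[RHS]mul1mx -(mulVmx (unitmx_perm F t)) -mulmxA tV mulmx1.
Qed.

Lemma mulmx_perm_invmx (F : fieldType) n (s t : 'S_n) (A : 'M[F]_n) :
  perm_mx s *m A *m invmx (perm_mx t) = \matrix_(k, l) A (s k) (t l).
Proof.
by rewrite invmx_perm -row_permE -col_permE; apply/matrixP => k l; rewrite !mxE.
Qed.

Lemma in_Map_sym (R : realType) N (A B P Q : 'M[R[i]]_N) :
  A^T = A -> B^T = B -> in_Map A B P Q -> in_Map A B Q P.
Proof.
move=> A_sym B_sym [/is_perm_mxP[s ->] [/is_perm_mxP[t ->]]].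
rewrite !invmx_perm => AB; split; [|split]; try exact: perm_mx_is_perm.
by rewrite -B_sym -AB !trmx_mul !tr_perm_mx invgK A_sym invmx_perm mulmxA.
Qed.

Lemma fourier_mx_tr (R : realType) N r (ns : 'I_r -> nat) :
  (@fourier_mx R N r ns)^T = fourier_mx N ns.
Proof. by apply/matrixP => k l; rewrite !mxE fentryC. Qed.

Section PermutationMatrices.
Variables (R : realType) (N r s : nat) (ns : 'I_r -> nat) (ms : 'I_s -> nat).
Hypotheses (card_F : (\prod_(x < r) (ns x).+1)%N = N)
           (card_G : (\prod_(x < s) (ms x).+1)%N = N).

Lemma Pinvmx_trmx (h : grp ns -> grp ms) :
  @Pinvmx R N r s ns ms h = (@Pmx R N s r ms ns h)^T.
Proof. by apply/matrixP => k l; rewrite !mxE. Qed.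

Lemma Pmx_perm_mx (phi : grp ms -> grp ns) (sg : 'S_N) :
  (forall k : 'I_N, phi (lexdec ms k) = lexdec ns (sg k)) ->
  @Pmx R N r s ns ms phi = perm_mx sg.
Proof.
move=> phi_sg; apply/matrixP => k l.
by rewrite !mxE phi_sg (inj_eq (lexdec_inj card_F)).
Qed.

Lemma exists_perm_lexdec (phi : grp ms -> grp ns) : bijective phi ->
  exists sg : 'S_N, forall k : 'I_N, phi (lexdec ms k) = lexdec ns (sg k).
Proof.
move=> [phiV phiK phiVK]; have [gF lexF gFK] := lexdec_bij card_F.
have sg_inj : injective (fun k : 'I_N => gF (phi (lexdec ms k))).
  by move=> k k' /(can_inj gFK)/(can_inj phiK)/(lexdec_inj card_G).
by exists (perm sg_inj) => k; rewrite permE /= gFK.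
Qed.

End PermutationMatrices.
Arguments Pmx_perm_mx {R N r s ns ms} card_F {phi sg}.
Arguments exists_perm_lexdec {N r s ns ms} card_F card_G {phi}.

Section FourierMaps.
Variables (R : realType) (N r s : nat) (ns : 'I_r -> nat) (ms : 'I_s -> nat).
Hypotheses (card_F : (\prod_(x < r) (ns x).+1)%N = N)
           (card_G : (\prod_(x < s) (ms x).+1)%N = N).
Local Notation F := (@fourier_mx R N r ns).
Local Notation G := (@fourier_mx R N s ms).
Local Notation Pmx := (@Pmx R N r s ns ms).
Local Notation Pinvmx := (@Pinvmx R N r s ns ms).
Local Notation hFG := (@hFG R r s ns ms).

Lemma card_grp_FG : #|grp ns| = #|grp ms|.
Proof. by rewrite !card_grp card_F card_G. Qed.

Lemma in_Map_fourier_iso (sg tg : 'S_N) :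
  in_Map F G (perm_mx sg) (perm_mx tg) ->
  exists chi, is_grp_iso chi /\ perm_mx sg = Pmx chi /\ perm_mx tg = Pinvmx (hFG chi).
Proof.
move=> [_ [_]]; rewrite mulmx_perm_invmx => /matrixP eqFG.
have [gF lexF gFK] := lexdec_bij card_F.
have [gG lexG gGK] := lexdec_bij card_G.
pose chi g := lexdec ns (sg (gG g)); pose h f := lexdec ms (tg^-1%g (gF f)).
have chi_h : intertwines R chi h.
  move=> i j; have := eqFG (gG i) (tg^-1%g (gF j)).
  by rewrite !mxE permKV gFK gGK.
have chi_iso : is_grp_iso chi.
  split; last exact: intertwines_gadd chi_h.
  exists (fun f => lexdec ms (sg^-1%g (gF f))) => [g|f].
    by rewrite /chi lexF permK gGK.
  by rewrite /chi lexG permKV gFK.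
exists chi; split=> //; split.
  by apply/esym/Pmx_perm_mx => // k; rewrite /chi lexG.
rewrite Pinvmx_trmx (@Pmx_perm_mx R N s r ms ns card_G _ tg^-1%g) => [|k].
  by rewrite tr_perm_mx invgK.
by rewrite (hFG_unique card_grp_FG chi_iso chi_h) /h lexF.
Qed.

Lemma iso_in_Map_fourier chi :
  is_grp_iso chi -> in_Map F G (Pmx chi) (Pinvmx (hFG chi)).
Proof.
move=> chi_iso; have [h_bij chi_h] := hFG_spec R card_grp_FG chi_iso.
have [sg chi_sg] := exists_perm_lexdec card_F card_G (proj1 chi_iso).
have [tg h_tg] := exists_perm_lexdec card_G card_F h_bij.
rewrite Pinvmx_trmx (Pmx_perm_mx card_F chi_sg) (Pmx_perm_mx card_G h_tg).
rewrite tr_perm_mx; split; [|split]; try exact: perm_mx_is_perm.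
rewrite mulmx_perm_invmx; apply/matrixP => k l.
by rewrite !mxE -chi_sg chi_h h_tg permKV.
Qed.

Lemma in_Map_fourierE (P Q : 'M[R[i]]_N) :
  in_Map F G P Q <->
  exists chi, is_grp_iso chi /\ P = Pmx chi /\ Q = Pinvmx (hFG chi).
Proof.
split=> [|[chi [chi_iso [-> ->]]]]; last exact: iso_in_Map_fourier.
move=> FG_PQ; case: (FG_PQ) => /is_perm_mxP[sg P_sg] [/is_perm_mxP[tg Q_tg] _].
by rewrite P_sg Q_tg in FG_PQ *; apply: in_Map_fourier_iso.
Qed.

Lemma in_Map_fourierE_swap (P Q : 'M[R[i]]_N) :
  in_Map F G P Q <->
  exists chi, is_grp_iso chi /\ P = Pinvmx (hFG chi) /\ Q = Pmx chi.
Proof.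
have swap P' Q' : in_Map F G P' Q' -> in_Map F G Q' P'.
  by apply: in_Map_sym; apply: fourier_mx_tr.
split=> [/swap/in_Map_fourierE [chi [? [-> ->]]] | [chi [? [-> ->]]]].
  by exists chi.
by apply/swap/in_Map_fourierE; exists chi.
Qed.

End FourierMaps.
Arguments in_Map_fourierE {R N r s ns ms} card_F card_G P Q.
Arguments in_Map_fourierE_swap {R N r s ns ms} card_F card_G P Q.

Theorem corollary4p8 (R : realType) (N r s : nat)
    (ns : 'I_r -> nat) (ms : 'I_s -> nat)
    (hF : (\prod_(x < r) (ns x).+1)%N = N)
    (hG : (\prod_(x < s) (ms x).+1)%N = N) :
  (* (a) *)
  (forall P Q : 'M[R[i]]_N,
     (in_Stab (@fourier_mx R N r ns) P Q <->
      exists rho : grp ns -> grp ns, is_grp_iso rho /\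
        P = @Pmx R N r r ns ns rho /\
        Q = @Pinvmx R N r r ns ns (@hFG R r r ns ns rho)) /\
     (in_Stab (@fourier_mx R N r ns) P Q <->
      exists rho : grp ns -> grp ns, is_grp_iso rho /\
        P = @Pinvmx R N r r ns ns (@hFG R r r ns ns rho) /\
        Q = @Pmx R N r r ns ns rho)) /\
  (* (b) *)
  (forall P Q : 'M[R[i]]_N,
     (in_Map (@fourier_mx R N r ns) (@fourier_mx R N s ms) P Q <->
      exists chi : grp ms -> grp ns, is_grp_iso chi /\
        P = @Pmx R N r s ns ms chi /\
        Q = @Pinvmx R N r s ns ms (@hFG R r s ns ms chi)) /\
     (in_Map (@fourier_mx R N r ns) (@fourier_mx R N s ms) P Q <->
      exists chi : grp ms -> grp ns, is_grp_iso chi /\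
        P = @Pinvmx R N r s ns ms (@hFG R r s ns ms chi) /\
        Q = @Pmx R N r s ns ms chi)).
Proof.
split=> P Q; split.
- exact: (in_Map_fourierE hF hF).
- exact: (in_Map_fourierE_swap hF hF).
- exact: (in_Map_fourierE hF hG).
- exact: (in_Map_fourierE_swap hF hG).
Qed.
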